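(* Let $l,m,n$ be positive integers with $l > m\geq n\geq \frac{l}{2}$, and let $c_1,c_2\in\mathbb{Q}$ be constants. For $0\le k\le m$ and $r\in\{1,2\}$ write $$U_k^{(r)}:=c_1\bigl(H_{k+n}^{(r)} - H_{k+l-n-1}^{(r)}\bigr) + c_2 \bigl(H_{k+m}^{(r)} - H_{k+l-m-1}^{(r)}\bigr).$$ Then \begin{multline*} \sum_{k=0}^{n} \binom{m+k}{k} \binom{m}{k} \binom{n+k}{k} \binom{n}{k} \Bigl\{ \Bigl[1+k \bigl(H_{m+k}^{(1)} +H_{m-k}^{(1)} + H_{n+k}^{(1)} + H_{n-k}^{(1)} -4H_k^{(1)} \bigr)\Bigr] U_k^{(1)} - k\, U_k^{(2)} \Bigr\}\\ + \sum_{k=n+1}^{m} (-1)^{k-n} \binom{m+k}{k} \binom{m}{k} \binom{n+k}{k} \Big/ \binom{k-1}{n}\; U_k^{(1)} = 0. \end{multline*}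
   Context: For non-negative integers $i$ and $n$, the generalized harmonic sum is $H^{(i)}_{n}:=\sum_{j=1}^{n} j^{-i}$ for $n\ge 1$, and $H^{(i)}_{0}:=0$. An empty sum (e.g. the second sum when $m=n$) equals $0$. *)

From mathcomp Require Import all_boot all_order all_algebra.
Set Implicit Arguments. Unset Strict Implicit. Unset Printing Implicit Defensive.
Import Order.TTheory GRing.Theory Num.Theory.
Local Open Scope ring_scope.

Definition H (i n : nat) : rat := \sum_(1 <= j < n.+1) ((j%:R) ^+ i)^-1.

Definition U (c1 c2 : rat) (l m n : nat) (r k : nat) : rat :=
  c1 * (H r (k + n) - H r (k + l - n - 1)) + c2 * (H r (k + m) - H r (k + l - m - 1)).

(* For 1 <= j <= m consider the rational function
     R_j(x) = x \prod_(1 <= i <= m, i <> j) (x + i) \prod_(1 <= i <= n) (x + i)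
              / (\prod_(n < i <= m) (x - i) \prod_(0 <= i <= n) (x - i)^2).
   Its denominator exceeds its numerator in degree by two, so the sum of its
   residues vanishes.  Up to the sign (-1)^(m-n), the residue at the simple pole
   k in (n, m] is the k-th term of the second sum of the theorem with U^(1)_k
   replaced by 1/(k+j), and the residue at the double pole k in [0, n] is the
   k-th term of the first sum with U^(r)_k replaced by 1/(k+j)^r; the harmonic
   numbers come from the logarithmic derivative of R_j.  As m < l <= 2n, each
   U^(r)_k is a linear combination of the 1/(k+j)^r with 1 <= j <= m, whence the
   theorem.
   Over any field, the vanishing of the residue sum follows by induction on the
   degree of the denominator: dividing the numerator by X - a for a pole a
   removes one factor of the denominator, and the constant remainder 1 is itself
   a combination of two such cancellations, ((X - b) - (X - a)) / (a - b). *)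

From mathcomp Require Import all_boot all_order all_algebra.
From mathcomp Require Import ring zify.
Set Implicit Arguments. Unset Strict Implicit. Unset Printing Implicit Defensive.
Import Order.TTheory GRing.Theory Num.Theory.
Local Open Scope ring_scope.

Lemma remC (T : eqType) (s : seq T) x y : uniq s -> rem x (rem y s) = rem y (rem x s).
Proof.
move=> us; rewrite (rem_filter x) ?rem_uniq // (rem_filter y us).
rewrite (rem_filter y) ?rem_uniq // (rem_filter x us) -!filter_predI.
by apply: eq_filter => z /=; rewrite andbC.
Qed.

Lemma uniq_cat_memN (T : eqType) (s1 s2 : seq T) x :
  uniq (s1 ++ s2) -> x \in s1 -> x \notin s2.
Proof. by rewrite cat_uniq => /and3P[_ /hasPn s2N _] s1x; apply/negP => /s2N; rewrite s1x. Qed.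

Section ResidueSum.
Variable F : fieldType.
Implicit Types (s t : seq F) (a b x : F) (N P Q : {poly F}).

Definition prodXsubC s : {poly F} := \prod_(x <- s) ('X - x%:P).

Lemma prodXsubC_cons a s : prodXsubC (a :: s) = ('X - a%:P) * prodXsubC s.
Proof. by rewrite /prodXsubC big_cons. Qed.

Lemma prodXsubC_cat s t : prodXsubC (s ++ t) = prodXsubC s * prodXsubC t.
Proof. by rewrite /prodXsubC big_cat. Qed.

Lemma prodXsubC_rem a s : a \in s -> prodXsubC s = ('X - a%:P) * prodXsubC (rem a s).
Proof. by move=> sa; rewrite -prodXsubC_cons; apply/perm_big/perm_to_rem. Qed.

Lemma horner_prodXsubC s x : (prodXsubC s).[x] = \prod_(y <- s) (x - y).
Proof. by rewrite horner_prod; apply: eq_bigr => y _; rewrite hornerXsubC. Qed.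

Lemma horner_prodXsubC_eq0 s x : ((prodXsubC s).[x] == 0) = (x \in s).
Proof. by rewrite -rootE root_prod_XsubC. Qed.

Lemma deriv_prodXsubC s x : x \notin s ->
  (prodXsubC s)^`().[x] = (prodXsubC s).[x] * \sum_(y <- s) (x - y)^-1.
Proof.
elim: s => [|y s IHs]; first by rewrite big_nil /prodXsubC big_nil derivC horner0 mulr0.
rewrite in_cons negb_or => /andP[xy xs].
have xy0 : x - y != 0 by rewrite subr_eq0.
rewrite prodXsubC_cons derivM derivXsubC mul1r !hornerE big_cons IHs //.
by field.
Qed.

Definition den s1 s2 := prodXsubC (s1 ++ s2 ++ s2).

Lemma denE s1 s2 : den s1 s2 = prodXsubC s1 * prodXsubC s2 * prodXsubC s2.
Proof. by rewrite /den !prodXsubC_cat mulrA. Qed.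

Definition deriv_quot_at N P a :=
  (N^`().[a] * P.[a] - N.[a] * P^`().[a]) / P.[a] ^+ 2.

(* The sum of the residues of the rational function [N / den s1 s2], whose
   poles at [s1] are simple and those at [s2] double. *)
Definition residue_sum s1 s2 N :=
  \sum_(a <- s1) N.[a] / (den (rem a s1) s2).[a]
  + \sum_(b <- s2) deriv_quot_at N (den s1 (rem b s2)) b.

Lemma residue_sumD s1 s2 P Q :
  residue_sum s1 s2 (P + Q) = residue_sum s1 s2 P + residue_sum s1 s2 Q.
Proof.
rewrite /residue_sum addrACA -!big_split /=; congr (_ + _); apply: eq_bigr => a _.
  by rewrite hornerD mulrDl.
by rewrite /deriv_quot_at derivD !hornerD -mulrDl; congr (_ / _); ring.
Qed.

Lemma residue_sumZ s1 s2 c P :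
  residue_sum s1 s2 (c *: P) = c * residue_sum s1 s2 P.
Proof.
rewrite /residue_sum mulrDr !mulr_sumr; congr (_ + _); apply: eq_bigr => a _.
  by rewrite hornerZ mulrA.
by rewrite /deriv_quot_at derivZ !hornerZ !mulrA; congr (_ / _); ring.
Qed.

Lemma horner_quot_XsubCM a x P Q : x != a -> Q.[x] != 0 ->
  (('X - a%:P) * P).[x] / (('X - a%:P) * Q).[x] = P.[x] / Q.[x].
Proof.
move=> xa Qx; have xa0 : x - a != 0 by rewrite subr_eq0.
by rewrite !hornerM hornerXsubC; field; apply/andP.
Qed.

Lemma deriv_quot_at_XsubCM a x P Q : x != a -> Q.[x] != 0 ->
  deriv_quot_at (('X - a%:P) * P) (('X - a%:P) * Q) x = deriv_quot_at P Q x.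
Proof.
move=> xa Qx; have xa0 : x - a != 0 by rewrite subr_eq0.
rewrite /deriv_quot_at !derivM derivXsubC !mul1r !hornerD !hornerM !hornerXsubC.
by field; apply/andP.
Qed.

Lemma residue_sum_XsubCM_simple s1 s2 a Q : uniq (s1 ++ s2) -> a \in s1 ->
  residue_sum s1 s2 (('X - a%:P) * Q) = residue_sum (rem a s1) s2 Q.
Proof.
move=> u12 s1a; have := u12; rewrite cat_uniq => /and3P[u1 _ u2].
rewrite /residue_sum (big_rem a s1a) /= hornerM hornerXsubC subrr !mul0r add0r.
congr (_ + _); apply: eq_big_seq => x.
- rewrite mem_rem_uniq // inE => /andP[xa s1x].
  have s1xa : a \in rem x s1 by rewrite mem_rem_uniq // inE eq_sym xa.
  have -> : den (rem x s1) s2 = ('X - a%:P) * den (rem x (rem a s1)) s2.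
    by rewrite !denE (prodXsubC_rem s1xa) remC // !mulrA.
  rewrite horner_quot_XsubCM // /den horner_prodXsubC_eq0 !mem_cat orbb.
  by rewrite mem_rem_uniqF ?rem_uniq // (uniq_cat_memN u12).
- move=> s2x; have s1xN : x \notin s1 by apply: (uniq_cat_memN (s1 := s2)); rewrite // uniq_catC.
  have xa : x != a by apply: contraNneq s1xN => ->.
  have -> : den s1 (rem x s2) = ('X - a%:P) * den (rem a s1) (rem x s2).
    by rewrite !denE (prodXsubC_rem s1a) !mulrA.
  rewrite deriv_quot_at_XsubCM // /den horner_prodXsubC_eq0 !mem_cat orbb.
  by rewrite mem_rem_uniqF // mem_rem_uniq // inE (negbTE s1xN) andbF.
Qed.

Lemma residue_sum_XsubCM_double s1 s2 a Q : uniq (s1 ++ s2) -> a \in s2 ->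
  residue_sum s1 s2 (('X - a%:P) * Q) = residue_sum (a :: s1) (rem a s2) Q.
Proof.
move=> u12 s2a; have := u12; rewrite cat_uniq => /and3P[u1 _ u2].
have s1aN : a \notin s1 by apply: (uniq_cat_memN (s1 := s2)); rewrite // uniq_catC.
rewrite /residue_sum big_cons (big_rem a s2a) /= eqxx addrCA addrA.
congr (_ + _ + _).
- have Ea : (den s1 (rem a s2)).[a] != 0.
    by rewrite /den horner_prodXsubC_eq0 !mem_cat orbb mem_rem_uniqF // orbF.
  rewrite /deriv_quot_at derivM derivXsubC mul1r !hornerD !hornerM !hornerXsubC.
  by rewrite subrr !mul0r addr0 subr0; field.
- apply: eq_big_seq => x s1x.
  have xa : x != a by apply: contraNneq s1aN => <-.
  rewrite eq_sym (negbTE xa).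
  have -> : den (rem x s1) s2 = ('X - a%:P) * den (a :: rem x s1) (rem a s2).
    by rewrite !denE prodXsubC_cons (prodXsubC_rem s2a); ring.
  rewrite horner_quot_XsubCM // /den horner_prodXsubC_eq0 in_cons !mem_cat orbb negb_or xa.
  by rewrite mem_rem_uniqF // mem_rem_uniq // inE (negbTE (uniq_cat_memN u12 s1x)) andbF.
- apply: eq_big_seq => x; rewrite mem_rem_uniq // inE => /andP[xa s2x].
  have s2xa : a \in rem x s2 by rewrite mem_rem_uniq // inE eq_sym xa.
  have s1xN : x \notin s1 by apply: (uniq_cat_memN (s1 := s2)); rewrite // uniq_catC.
  have -> : den s1 (rem x s2) = ('X - a%:P) * den (a :: s1) (rem x (rem a s2)).
    by rewrite !denE prodXsubC_cons (prodXsubC_rem s2xa) remC //; ring.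
  rewrite deriv_quot_at_XsubCM // /den horner_prodXsubC_eq0 in_cons !mem_cat orbb.
  by rewrite (negbTE xa) (negbTE s1xN) mem_rem_uniqF ?rem_uniq.
Qed.

Lemma residue_sum_XsubCM s1 s2 a : uniq (s1 ++ s2) -> a \in s1 ++ s2 ->
  exists s1' s2', [/\ uniq (s1' ++ s2'),
    (size s1' + 2 * size s2').+1 = (size s1 + 2 * size s2)%N &
    forall Q, residue_sum s1 s2 (('X - a%:P) * Q) = residue_sum s1' s2' Q].
Proof.
move=> u12; have := u12; rewrite cat_uniq => /and3P[u1 s12 u2].
rewrite mem_cat => /orP[s1a|s2a].
- exists (rem a s1), s2; split.
  + rewrite cat_uniq rem_uniq // u2 andbT; apply: contra s12 => /hasP[x s2x].
    by move=> /mem_rem s1x; apply/hasP; exists x.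
  + by rewrite size_rem //; case: (s1) s1a => //= *; lia.
  + by move=> Q; apply: residue_sum_XsubCM_simple.
- have s1aN : a \notin s1 by apply: (uniq_cat_memN (s1 := s2)); rewrite // uniq_catC.
  exists (a :: s1), (rem a s2); split.
  + rewrite cat_cons cons_uniq mem_cat negb_or s1aN mem_rem_uniqF //= cat_uniq u1 rem_uniq //.
    by rewrite andbT; apply: contra s12 => /hasP[x /mem_rem s2x s1x]; apply/hasP; exists x.
  + by rewrite size_rem //=; case: (s2) s2a => //= *; lia.
  + by move=> Q; apply: residue_sum_XsubCM_double.
Qed.

Lemma residue_sum1_eq0 s1 s2 : uniq (s1 ++ s2) -> (2 <= size s1 + 2 * size s2)%N ->
  residue_sum s1 s2 1 = 0.
Proof.
move Ew : (size s1 + 2 * size s2)%N => w.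
elim: w s1 s2 Ew => [|w IHw] s1 s2 Ew u12 w_ge2 //.
have [w1|w_neq1] := eqVneq w 1%N.
  move: Ew u12; rewrite {}w1.
  case: s1 => [|a [|b [|? ?]]]; case: s2 => [|c [|? ?]] /= Ew; try lia.
    rewrite /residue_sum big_nil big_seq1 /= eqxx /deriv_quot_at /den /prodXsubC big_nil.
    by rewrite derivC !hornerE oppr0 mul0r.
  rewrite andbT inE => ab; rewrite /residue_sum !big_cons !big_nil !addr0 /=.
  rewrite eqxx (negbTE ab) !denE /= eqxx !prodXsubC_cons /prodXsubC !big_nil.
  have ab0 : a - b != 0 by rewrite subr_eq0.
  have ba0 : b - a != 0 by rewrite subr_eq0 eq_sym.
  by rewrite !mulr1 !hornerE; field; apply/andP.
have [a [b [s12a s12b ab]]] : exists a b, [/\ a \in s1 ++ s2, b \in s1 ++ s2 & a != b].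
  have : (1 < size (s1 ++ s2))%N by rewrite size_cat; lia.
  case: (s1 ++ s2) u12 => [|a [|b t]] //= /andP[+ _]; rewrite inE negb_or => /andP[ab _] _.
  by exists a, b; rewrite !inE !eqxx ?orbT.
have [s1a [s2a [ua wa Ra]]] := residue_sum_XsubCM u12 s12a.
have [s1b [s2b [ub wb Rb]]] := residue_sum_XsubCM u12 s12b.
have ab0 : a - b != 0 by rewrite subr_eq0.
have -> : 1 = (a - b)^-1 *: (('X - b%:P) * 1 - ('X - a%:P) * 1) :> {poly F}.
  have -> : ('X - b%:P) * 1 - ('X - a%:P) * 1 = (a - b)%:P by rewrite polyCB; ring.
  by rewrite -mul_polyC -polyCM mulVf.
rewrite residue_sumZ residue_sumD -(scaleN1r (('X - a%:P) * 1)) residue_sumZ Ra Rb.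
rewrite (IHw s1a) ?(IHw s1b); try lia.
by rewrite !mulr0 addr0 mulr0.
Qed.

Lemma residue_sum_eq0 s1 s2 N : uniq (s1 ++ s2) ->
  (size N < size s1 + 2 * size s2)%N -> residue_sum s1 s2 N = 0.
Proof.
have [k] := ubnP (size N); elim: k => // k IHk in s1 s2 N *; rewrite ltnS => Nk u12 Nw.
have [->|N0] := eqVneq N 0.
  by rewrite -(scale0r 0) residue_sumZ mul0r.
have [a s12a] : exists a, a \in s1 ++ s2.
  by case: (s1 ++ s2) (size_cat s1 s2) => [|a s] /=; [lia | exists a; rewrite inE eqxx].
have [s1' [s2' [u12' w' R]]] := residue_sum_XsubCM u12 s12a.
have sizeN : (0 < size N)%N by rewrite size_poly_gt0.
have sizeq : size (N %/ ('X - a%:P)) = (size N).-1.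
  by rewrite size_divp ?polyXsubC_eq0 // size_XsubC subn1.
rewrite (divp_eq N ('X - a%:P)) modp_XsubC mulrC residue_sumD R -(alg_polyC N.[a]) residue_sumZ.
by rewrite IHk ?residue_sum1_eq0 ?mulr0 ?addr0 ?sizeq //; lia.
Qed.

Lemma deriv_quot_at_XprodXsubC s t a : a \notin s -> a \notin t ->
  deriv_quot_at ('X * prodXsubC s) (prodXsubC t) a
  = (prodXsubC s).[a] / (prodXsubC t).[a]
    * (1 + a * (\sum_(y <- s) (a - y)^-1 - \sum_(y <- t) (a - y)^-1)).
Proof.
move=> sa ta; have ta0 : (prodXsubC t).[a] != 0 by rewrite horner_prodXsubC_eq0.
rewrite /deriv_quot_at derivM derivX mul1r hornerD !hornerE !deriv_prodXsubC //.
by field.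
Qed.

End ResidueSum.

Section ProdIota.
Variable R : comPzRingType.

Lemma prod_iota_natrB_below a c x : (a + c <= x)%N ->
  \prod_(i <- iota a c) (x%:R - i%:R : R) * (x - a - c)`!%:R = (x - a)`!%:R.
Proof.
elim: c a => [|c IHc] a acx; first by rewrite big_nil mul1r subn0.
rewrite /= big_cons -mulrA.
have -> : (x - a - c.+1 = x - a.+1 - c)%N by lia.
rewrite IHc; last by lia.
rewrite -natrB; last by lia.
have -> : (x - a = (x - a.+1).+1)%N by lia.
by rewrite factS natrM.
Qed.

Lemma prod_iota_natrB_above a c x : (x < a)%N ->
  \prod_(i <- iota a c) (x%:R - i%:R : R) * (a - x - 1)`!%:R
  = (-1) ^+ c * (a + c - x - 1)`!%:R.
Proof.
elim: c a => [|c IHc] a xa; first by rewrite big_nil mul1r expr0 mul1r addn0.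
rewrite /= big_cons.
have -> : (x%:R - a%:R : R) = - ((a - x - 1).+1)%:R.
  have -> : ((a - x - 1).+1 = a - x)%N by lia.
  by rewrite natrB ?opprB //; lia.
have := IHc a.+1 (ltnW xa).
have -> : (a.+1 - x - 1 = (a - x - 1).+1)%N by lia.
have -> : (a.+1 + c - x - 1 = a + c.+1 - x - 1)%N by lia.
rewrite factS natrM => IH.
by rewrite exprS -[RHS]mulrA -IH; ring.
Qed.

Lemma prod_iota_natrD c x :
  \prod_(i <- iota 1 c) (x%:R + i%:R : R) * x`!%:R = (x + c)`!%:R.
Proof.
elim: c => [|c IHc]; first by rewrite big_nil mul1r addn0.
rewrite -[X in iota _ X]addn1 iotaD big_cat big_seq1 /= mulrAC IHc addnS factS natrM.
by rewrite -natrD add1n addnS mulrC.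
Qed.

End ProdIota.

Lemma harmonicS i p : H i p.+1 = H i p + ((p.+1)%:R ^+ i)^-1.
Proof. by rewrite /H big_nat_recr. Qed.

Lemma harmonic0 i : H i 0 = 0.
Proof. by rewrite /H big_geq. Qed.

Lemma harmonicD r x c :
  H r (x + c) - H r x = \sum_(i <- iota 1 c) (x%:R + i%:R) ^- r.
Proof.
elim: c => [|c IHc]; first by rewrite addn0 subrr big_nil.
rewrite -[X in iota _ X]addn1 iotaD big_cat big_seq1 /= -IHc addnS harmonicS -natrD.
by rewrite add1n addnS addrAC.
Qed.

Lemma sum_iota_natrB_below a c x : (a + c <= x)%N ->
  \sum_(i <- iota a c) (x%:R - i%:R : rat)^-1 = H 1 (x - a) - H 1 (x - a - c).
Proof.
elim: c a => [|c IHc] a acx; first by rewrite big_nil subn0 subrr.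
rewrite /= big_cons.
have -> : (x - a - c.+1 = x - a.+1 - c)%N by lia.
rewrite IHc; last by lia.
rewrite -natrB; last by lia.
have -> : (x - a = (x - a.+1).+1)%N by lia.
by rewrite harmonicS expr1; ring.
Qed.

Lemma sum_iota_natrB_above a c x : (x < a)%N ->
  \sum_(i <- iota a c) (x%:R - i%:R : rat)^-1
  = H 1 (a - x - 1) - H 1 (a + c - x - 1).
Proof.
elim: c a => [|c IHc] a xa; first by rewrite big_nil addn0 subrr.
rewrite /= big_cons.
have -> : (x%:R - a%:R : rat) = - ((a - x - 1).+1)%:R.
  have -> : ((a - x - 1).+1 = a - x)%N by lia.
  by rewrite natrB ?opprB //; lia.
rewrite IHc; last by lia.
have -> : (a.+1 - x - 1 = (a - x - 1).+1)%N by lia.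
have -> : (a.+1 + c - x - 1 = a + c.+1 - x - 1)%N by lia.
by rewrite harmonicS expr1 invrN; ring.
Qed.

Lemma rem_map (T1 T2 : eqType) (f : T1 -> T2) x s :
  injective f -> rem (f x) (map f s) = map f (rem x s).
Proof.
by move=> f_inj; elim: s => //= y s IHs; rewrite (inj_eq f_inj) IHs; case: eqP.
Qed.

Lemma rem_iota a c k : (a <= k < a + c)%N ->
  rem k (iota a c) = iota a (k - a) ++ iota k.+1 (a + c - k.+1).
Proof.
elim: c a => [|c IHc] a /andP[ak kac]; first by lia.
rewrite /=; case: eqP => [<-|/eqP ak']; first by rewrite subnn addnS subSS addKn.
have -> : (k - a = (k - a.+1).+1)%N by lia.
by rewrite /= IHc ?addSnnS //; apply/andP; split; lia.
Qed.

Section FactorialCast.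
Variable R : numFieldType.

Lemma natr_fact_neq0 p : (p`!%:R : R) != 0.
Proof. by rewrite pnatr_eq0 -lt0n fact_gt0. Qed.

Lemma natr_bin a b : (b <= a)%N ->
  ('C(a, b)%:R : R) = a`!%:R / (b`!%:R * (a - b)`!%:R).
Proof.
move=> ba; have nz : (b`!%:R * (a - b)`!%:R : R) != 0 by rewrite mulf_neq0 ?natr_fact_neq0.
by apply: (mulIf nz); rewrite divfK // -!natrM bin_fact.
Qed.

Lemma natr_addn_neq0 k j : (0 < j)%N -> (k%:R + j%:R : R) != 0.
Proof. by move=> j_gt0; rewrite -natrD pnatr_eq0; lia. Qed.

End FactorialCast.

Definition coefA m n k : rat := ('C(m + k, k) * 'C(m, k) * 'C(n + k, k) * 'C(n, k))%:R.

Definition coefB m n k : rat :=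
  (-1) ^+ (k - n) * ('C(m + k, k) * 'C(m, k) * 'C(n + k, k))%:R / 'C(k.-1, n)%:R.

Definition harmS m n k : rat :=
  H 1 (m + k) + H 1 (m - k) + H 1 (n + k) + H 1 (n - k) - 4 * H 1 k.

Definition bin_harm_sum m n (u v : nat -> rat) :=
  \sum_(0 <= k < n.+1) coefA m n k * ((1 + k%:R * harmS m n k) * u k - k%:R * v k)
  + \sum_(n.+1 <= k < m.+1) coefB m n k * u k.

Section PartialFractions.
Variables m n : nat.
Hypothesis n_le_m : (n <= m)%N.

Let simple_poles : seq rat := [seq i%:R | i <- iota n.+1 (m - n)].
Let double_poles : seq rat := [seq i%:R | i <- iota 0 n.+1].
Let zeros j : seq rat := [seq - i%:R | i <- rem j (iota 1 m) ++ iota 1 n].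

Lemma horner_zeros j k : (1 <= j <= m)%N ->
  (prodXsubC (zeros j)).[k%:R]
  = (m + k)`!%:R * (n + k)`!%:R / ((k%:R + j%:R) * k`!%:R ^+ 2).
Proof.
move=> /andP[j_gt0 j_le_m].
rewrite /zeros horner_prodXsubC map_cat big_cat !big_map.
under eq_bigr do rewrite opprK.
under [X in _ * X = _]eq_bigr do rewrite opprK.
have jm : j \in iota 1 m by rewrite mem_iota; lia.
have := prod_iota_natrD rat m k; rewrite (big_rem j jm) /= addnC => <-.
rewrite (addnC n k) -(prod_iota_natrD rat n k).
by field; rewrite natr_addn_neq0 ?natr_fact_neq0.
Qed.

Lemma sum_zeros j k : (1 <= j <= m)%N ->
  \sum_(y <- zeros j) (k%:R - y)^-1
  = H 1 (m + k) + H 1 (n + k) - 2 * H 1 k - (k%:R + j%:R)^-1.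
Proof.
move=> /andP[j_gt0 j_le_m].
rewrite /zeros map_cat big_cat !big_map.
under eq_bigr do rewrite opprK -[_ + _]expr1.
under [X in _ + X = _]eq_bigr do rewrite opprK -[_ + _]expr1.
have jm : j \in iota 1 m by rewrite mem_iota; lia.
have := harmonicD 1 k m; rewrite (big_rem j jm) /= addnC expr1 => Em.
have := harmonicD 1 k n; rewrite addnC => <-.
have -> : H 1 (m + k) = H 1 (m + k) - H 1 k + H 1 k by rewrite subrK.
by rewrite Em; ring.
Qed.

Lemma horner_simple_poles k : (k <= n)%N ->
  (prodXsubC simple_poles).[k%:R] = (-1) ^+ (m - n) * (m - k)`!%:R / (n - k)`!%:R.
Proof.
move=> k_le_n; rewrite horner_prodXsubC big_map.
apply: (mulIf (natr_fact_neq0 rat (n - k))); rewrite divfK ?natr_fact_neq0 //.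
have := @prod_iota_natrB_above rat n.+1 (m - n) k k_le_n.
have -> : (n.+1 - k - 1 = n - k)%N by lia.
by have -> : (n.+1 + (m - n) - k - 1 = m - k)%N by lia.
Qed.

Lemma sum_simple_poles k : (k <= n)%N ->
  \sum_(y <- simple_poles) (k%:R - y)^-1 = H 1 (n - k) - H 1 (m - k).
Proof.
move=> k_le_n; rewrite big_map sum_iota_natrB_above //.
have -> : (n.+1 - k - 1 = n - k)%N by lia.
by have -> : (n.+1 + (m - n) - k - 1 = m - k)%N by lia.
Qed.

Lemma rem_double_poles k : (k <= n)%N ->
  rem k%:R double_poles = [seq i%:R | i <- iota 0 k ++ iota k.+1 (n - k)].
Proof.
move=> k_le_n; rewrite rem_map; last by move=> x y /eqP; rewrite eqr_nat => /eqP.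
by rewrite rem_iota ?subn0 ?add0n ?subSS //; lia.
Qed.

Lemma horner_double_poles_rem k : (k <= n)%N ->
  (prodXsubC (rem k%:R double_poles)).[k%:R]
  = (-1) ^+ (n - k) * k`!%:R * (n - k)`!%:R.
Proof.
move=> k_le_n; rewrite rem_double_poles // horner_prodXsubC map_cat big_cat !big_map.
have := @prod_iota_natrB_below rat 0 k k (leqnn k).
rewrite subn0 subnn mulr1 => ->.
have := @prod_iota_natrB_above rat k.+1 (n - k) k (ltnSn k).
have -> : (k.+1 - k - 1 = 0)%N by lia.
have -> : (k.+1 + (n - k) - k - 1 = n - k)%N by lia.
by rewrite mulr1 => ->; rewrite /=; ring.
Qed.

Lemma sum_double_poles_rem k : (k <= n)%N ->
  \sum_(y <- rem k%:R double_poles) (k%:R - y)^-1 = H 1 k - H 1 (n - k).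
Proof.
move=> k_le_n; rewrite rem_double_poles // map_cat big_cat !big_map.
rewrite sum_iota_natrB_below // sum_iota_natrB_above // subn0 subnn.
have -> : (k.+1 - k - 1 = 0)%N by lia.
have -> : (k.+1 + (n - k) - k - 1 = n - k)%N by lia.
by rewrite harmonic0 subr0 sub0r.
Qed.

Lemma horner_simple_poles_rem k : (n < k <= m)%N ->
  (prodXsubC (rem k%:R simple_poles)).[k%:R]
  = (-1) ^+ (m - k) * (k - n.+1)`!%:R * (m - k)`!%:R.
Proof.
move=> /andP[n_lt_k k_le_m].
rewrite rem_map; last by move=> x y /eqP; rewrite eqr_nat => /eqP.
rewrite rem_iota; last by lia.
rewrite horner_prodXsubC map_cat big_cat !big_map.
have := @prod_iota_natrB_below rat n.+1 (k - n.+1) k.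
rewrite subnKC // subnn mulr1 => /(_ (leqnn k)) ->.
have := @prod_iota_natrB_above rat k.+1 (m - k) k (ltnSn k).
have -> : (k.+1 - k - 1 = 0)%N by lia.
have -> : (k.+1 + (m - k) - k - 1 = m - k)%N by lia.
have -> : (n.+1 + (m - n) - k.+1 = m - k)%N by lia.
by rewrite mulr1 => ->; rewrite /=; ring.
Qed.

Lemma horner_double_poles k : (n < k)%N ->
  (prodXsubC double_poles).[k%:R] = k`!%:R / (k - n.+1)`!%:R.
Proof.
move=> n_lt_k; rewrite horner_prodXsubC big_map.
apply: (mulIf (natr_fact_neq0 rat (k - n.+1))); rewrite divfK ?natr_fact_neq0 //.
by have := @prod_iota_natrB_below rat 0 n.+1 k n_lt_k; rewrite !subn0.
Qed.

Lemma natr_notin_zeros j k : k%:R \notin zeros j.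
Proof.
apply/mapP => -[i]; rewrite mem_cat => /orP[/mem_rem|] /[!mem_iota] i_range /eqP.
  by rewrite -subr_eq0 opprK -natrD pnatr_eq0; lia.
by rewrite -subr_eq0 opprK -natrD pnatr_eq0; lia.
Qed.

Lemma uniq_double_poles : uniq double_poles.
Proof. by rewrite map_inj_uniq ?iota_uniq // => x y /eqP; rewrite eqr_nat => /eqP. Qed.

Lemma residue_at_double_pole j k : (1 <= j <= m)%N -> (k <= n)%N ->
  deriv_quot_at ('X * prodXsubC (zeros j)) (den simple_poles (rem k%:R double_poles)) k%:R
  = coefA m n k * ((1 + k%:R * harmS m n k) * (k%:R + j%:R)^-1
                   - k%:R * (k%:R + j%:R) ^- 2) / (-1) ^+ (m - n).
Proof.
move=> j_range k_le_n; set r := rem k%:R double_poles.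
have k_notin_simple : k%:R \notin simple_poles.
  by apply/mapP => -[i]; rewrite mem_iota => i_range /eqP; rewrite eqr_nat; lia.
have k_notin_r : k%:R \notin r by rewrite mem_rem_uniqF ?uniq_double_poles.
have E_k : (den simple_poles r).[k%:R]
    = (-1) ^+ (m - n) * (m - k)`!%:R / (n - k)`!%:R * (k`!%:R * (n - k)`!%:R) ^+ 2.
  rewrite denE !hornerM horner_simple_poles // horner_double_poles_rem //.
  have sq : (-1) ^+ (n - k) * (-1) ^+ (n - k) = 1 :> rat by rewrite -expr2 sqrr_sign.
  by rewrite -[RHS]mul1r -[in X in _ = X * _]sq; ring.
rewrite /den deriv_quot_at_XprodXsubC ?natr_notin_zeros //; last first.
  by rewrite !mem_cat !negb_or k_notin_simple k_notin_r.
rewrite -/(den _ _) E_k !big_cat /= horner_zeros // sum_zeros //.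
rewrite sum_simple_poles // sum_double_poles_rem //.
rewrite /coefA /harmS !natrM !natr_bin ?leq_addl ?(leq_trans k_le_n) // !addnK.
field.
by rewrite signr_eq0 natr_addn_neq0 ?natr_fact_neq0 //; case/andP: j_range.
Qed.

Lemma residue_at_simple_pole j k : (1 <= j <= m)%N -> (n < k <= m)%N ->
  ('X * prodXsubC (zeros j)).[k%:R] / (den (rem k%:R simple_poles) double_poles).[k%:R]
  = coefB m n k * (k%:R + j%:R)^-1 / (-1) ^+ (m - n).
Proof.
move=> j_range k_range; have /andP[n_lt_k k_le_m] := k_range.
have k_gt0 : (0 < k)%N by apply: leq_ltn_trans n_lt_k.
rewrite denE !hornerM hornerX horner_zeros // horner_simple_poles_rem //.
rewrite horner_double_poles // /coefB !natrM !natr_bin ?leq_addl // ?addnK; try lia.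
have -> : (k.-1 - n = k - n.+1)%N by lia.
have -> : k`!%:R = k%:R * k.-1`!%:R :> rat.
  by rewrite -natrM -[in LHS](prednK k_gt0) factS (prednK k_gt0).
have -> : (-1) ^+ (m - n) = (-1) ^+ (k - n) * (-1) ^+ (m - k) :> rat.
  by rewrite -exprD; congr (_ ^+ _); lia.
field.
rewrite !signr_eq0 natr_addn_neq0 ?natr_fact_neq0 ?pnatr_eq0 -?lt0n ?k_gt0 //.
by case/andP: j_range.
Qed.

Lemma bin_harm_sum_inv_shift j : (1 <= j <= m)%N ->
  bin_harm_sum m n (fun k => (k%:R + j%:R) ^- 1) (fun k => (k%:R + j%:R) ^- 2) = 0.
Proof.
move=> j_range; have sgn_neq0 : (-1) ^+ (m - n) != 0 :> rat by rewrite signr_eq0.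
have uniq_poles : uniq (simple_poles ++ double_poles).
  rewrite -map_cat map_inj_uniq; last by move=> x y /eqP; rewrite eqr_nat => /eqP.
  by rewrite uniq_catC -iotaD iota_uniq.
have size_num : (size ('X * prodXsubC (zeros j))%R
                 < size simple_poles + 2 * size double_poles)%N.
  rewrite -[X in X * _]subr0 -polyC0 -prodXsubC_cons /prodXsubC size_prod_XsubC /=.
  rewrite !size_map size_cat size_rem ?size_iota /=; first lia.
  by rewrite mem_iota; lia.
suff -> : bin_harm_sum m n (fun k => (k%:R + j%:R) ^- 1) (fun k => (k%:R + j%:R) ^- 2)
    = (-1) ^+ (m - n) * residue_sum simple_poles double_poles ('X * prodXsubC (zeros j)).
  by rewrite residue_sum_eq0 ?mulr0.
rewrite /bin_harm_sum /residue_sum mulrDr [in RHS]addrC !mulr_sumr !big_map /index_iota subn0 subSS.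
congr (_ + _); apply: eq_big_seq => k /[!mem_iota] k_range.
  by rewrite residue_at_double_pole // expr1 [RHS]mulrC divfK.
rewrite residue_at_simple_pole //; last by lia.
by rewrite expr1 [RHS]mulrC divfK.
Qed.

End PartialFractions.

Lemma eq_bin_harm_sum m n u u' v v' : u =1 u' -> v =1 v' ->
  bin_harm_sum m n u v = bin_harm_sum m n u' v'.
Proof.
by move=> eq_u eq_v; rewrite /bin_harm_sum; congr (_ + _); apply: eq_bigr => k _;
  rewrite eq_u ?eq_v.
Qed.

Lemma bin_harm_sum_lin m n a b u v u' v' :
  bin_harm_sum m n (fun k => a * u k + b * u' k) (fun k => a * v k + b * v' k)
  = a * bin_harm_sum m n u v + b * bin_harm_sum m n u' v'.
Proof.
rewrite /bin_harm_sum !mulrDr !mulr_sumr addrACA -!big_split /=.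
by congr (_ + _); apply: eq_bigr => k _; ring.
Qed.

Lemma bin_harm_sum_sum (I : Type) (J : seq I) m n (u v : I -> nat -> rat) :
  bin_harm_sum m n (fun k => \sum_(j <- J) u j k) (fun k => \sum_(j <- J) v j k)
  = \sum_(j <- J) bin_harm_sum m n (u j) (v j).
Proof.
rewrite /bin_harm_sum big_split /=; congr (_ + _); rewrite exchange_big /=.
  by apply: eq_bigr => k _; rewrite !mulr_sumr -sumrB mulr_sumr.
by apply: eq_bigr => k _; rewrite mulr_sumr.
Qed.

Lemma harmonicB_shift r k a b : (0 < a <= b.+1)%N ->
  H r (k + b) - H r (k + a - 1) = \sum_(j <- iota a (b.+1 - a)) (k%:R + j%:R) ^- r.
Proof.
move=> /andP[a_gt0 a_le_b1].
have := harmonicD r (k + a - 1) (b.+1 - a).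
have -> : (k + a - 1 + (b.+1 - a) = k + b)%N by lia.
move=> ->; rewrite -[X in _ = \sum_(j <- iota X _) _](subnK a_gt0) iotaDl big_map.
by apply: eq_bigr => i _; rewrite -!natrD; congr (_ ^- r); congr (_%:R); lia.
Qed.

Lemma U_sum_shifts c1 c2 l m n r k : (n <= m)%N -> (m < l)%N -> (l <= 2 * n)%N ->
  U c1 c2 l m n r k
  = c1 * \sum_(j <- iota (l - n) (n.+1 - (l - n))) (k%:R + j%:R) ^- r
  + c2 * \sum_(j <- iota (l - m) (m.+1 - (l - m))) (k%:R + j%:R) ^- r.
Proof.
move=> n_le_m m_lt_l l_le_2n; rewrite /U.
have -> : (k + l - n - 1 = k + (l - n) - 1)%N by lia.
have -> : (k + l - m - 1 = k + (l - m) - 1)%N by lia.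
by rewrite !harmonicB_shift //; lia.
Qed.

Theorem theorem1p3 (l m n : nat) (c1 c2 : rat) :
  (0 < n)%N -> (m < l)%N -> (n <= m)%N -> (l <= 2 * n)%N ->
  \sum_(0 <= k < n.+1)
     (('C(m + k, k) * 'C(m, k) * 'C(n + k, k) * 'C(n, k))%:R : rat) *
     ((1 + k%:R * (H 1 (m + k) + H 1 (m - k) + H 1 (n + k) + H 1 (n - k)
                   - 4 * H 1 k)) * U c1 c2 l m n 1 k
      - k%:R * U c1 c2 l m n 2 k)
  + \sum_(n.+1 <= k < m.+1)
     (-1) ^+ (k - n) * (('C(m + k, k) * 'C(m, k) * 'C(n + k, k))%:R : rat)
       / ('C(k.-1, n)%:R) * U c1 c2 l m n 1 k
  = 0.
Proof.
move=> _ m_lt_l n_le_m l_le_2n.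
pose inv_shifts J r k := \sum_(j <- J) (k%:R + j%:R) ^- r : rat.
pose J1 := iota (l - n) (n.+1 - (l - n)); pose J2 := iota (l - m) (m.+1 - (l - m)).
have U_shifts r : U c1 c2 l m n r =1 fun k => c1 * inv_shifts J1 r k + c2 * inv_shifts J2 r k.
  by move=> k; apply: U_sum_shifts.
have shifts_eq0 J : {subset J <= iota 1 m} ->
    bin_harm_sum m n (inv_shifts J 1) (inv_shifts J 2) = 0.
  move=> JP; rewrite bin_harm_sum_sum big1_seq // => j /andP[_ /JP].
  by rewrite mem_iota => j_range; apply: bin_harm_sum_inv_shift => //; lia.
change (bin_harm_sum m n (U c1 c2 l m n 1) (U c1 c2 l m n 2) = 0).
rewrite (eq_bin_harm_sum m n (U_shifts 1) (U_shifts 2)) bin_harm_sum_lin.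
by rewrite !shifts_eq0 ?mulr0 ?addr0 // => j; rewrite !mem_iota; lia.
Qed.
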